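(* Let $(\gamma_\nu)_{\nu\ge 0}$ be complex numbers, let $f(z)=\sum_{\nu=0}^{\infty}\gamma_\nu z^\nu$ be the corresponding formal power series, and let $f_n(z)=\sum_{\nu=0}^{n}\gamma_\nu z^\nu$ be its partial sums. Work in the field $\mathbb{C}((z))$ of formal Laurent series. Define numbers $C_k^{(n)}$ by $C_0^{(n)}=-\gamma_{n+1}$ and $C_{k+1}^{(n)}=C_k^{(n+2)}-\bigl[C_k^{(n+1)}\bigr]^2/C_k^{(n)}$ for $k,n\in\mathbb{N}_0$, and assume that $C_k^{(n)}\neq 0$ for all $k,n\in\mathbb{N}_0$ (in particular $\gamma_\nu\ne 0$ for all $\nu\ge1$). Let $\mathcal{A}_k^{(n)}$ be Aitken's iterated $\Delta^2$ process applied to $s_n=f_n(z)$: $\mathcal{A}_0^{(n)}=f_n(z)$, $\mathcal{A}_{k+1}^{(n)}=\mathcal{A}_k^{(n)}-\bigl[\Delta\mathcal{A}_k^{(n)}\bigr]^2/\Delta^2\mathcal{A}_k^{(n)}$, where $\Delta$ acts on the superscript: $\Delta\mathcal{A}_k^{(n)}=\mathcal{A}_k^{(n+1)}-\mathcal{A}_k^{(n)}$. Then all $\mathcal{A}_k^{(n)}$ are well defined elements of $\mathbb{C}[[z]]$, and for all $k,n\in\mathbb{N}_0$: (i) $\mathcal{A}_k^{(n)}=f(z)+z^{n+2k+1}R_k^{(n)}(z)$ with $R_k^{(n)}(z)\in\mathbb{C}[[z]]$ having constant term $C_k^{(n)}$; in particular $f(z)-\mathcal{A}_k^{(n)}=O(z^{n+2k+1})$;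 (ii) $\mathcal{A}_k^{(n)}=f_{n+2k}(z)+G_k^{(n)}z^{n+2k+1}+O(z^{n+2k+2})$, where $G_k^{(n)}=C_k^{(n)}+\gamma_{n+2k+1}$ and the numbers $G_k^{(n)}$ satisfy $G_0^{(n)}=0$, $G_1^{(n)}=\gamma_{n+2}^2/\gamma_{n+1}$, and $G_{k+1}^{(n)}=G_k^{(n+2)}+\dfrac{\bigl[\gamma_{n+2k+2}-G_k^{(n+1)}\bigr]^2}{\gamma_{n+2k+1}-G_k^{(n)}}$ for $k,n\in\mathbb{N}_0$.
   Context: $\mathbb{N}_0=\{0,1,2,\dots\}$. $O(z^m)$ denotes an element of $z^m\mathbb{C}[[z]]$. The number $G_k^{(n)}$ is interpreted as the prediction for the coefficient $\gamma_{n+2k+1}$, the first coefficient not used in computing $\mathcal{A}_k^{(n)}$ (which uses $f_n,\dots,f_{n+2k}$). *)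

From HB Require Import structures.
From mathcomp Require Import all_boot all_order all_algebra.
From mathcomp Require Import complex.
From mathcomp Require Import Rstruct.
Set Implicit Arguments. Unset Strict Implicit. Unset Printing Implicit Defensive.
Import Order.TTheory GRing.Theory Num.Theory.
Local Open Scope ring_scope.

Definition C : fieldType := (Rdefinitions.R)[i].

Definition fps := nat -> C.

Definition fps_add (a b : fps) : fps := fun m => a m + b m.
Definition fps_sub (a b : fps) : fps := fun m => a m - b m.
Definition fps_mul (a b : fps) : fps :=
  fun m => \sum_(i < m.+1) a i * b (m - i)%N.
Definition fps_shift (d : nat) (a : fps) : fps :=
  fun m => if (d <= m)%N then a (m - d)%N else 0.

Definition partial_sum (gamma : nat -> C) (n : nat) : fps :=
  fun m => if (m <= n)%N then gamma m else 0.

Definition Delta (A : nat -> fps) (n : nat) : fps := fps_sub (A n.+1) (A n).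
Definition Delta2 (A : nat -> fps) (n : nat) : fps :=
  fps_sub (Delta A n.+1) (Delta A n).

Fixpoint Cnum (gamma : nat -> C) (k : nat) : nat -> C :=
  match k with
  | 0 => fun n => - gamma n.+1
  | k'.+1 => fun n => Cnum gamma k' n.+2 - (Cnum gamma k' n.+1) ^+ 2 / Cnum gamma k' n
  end.

Definition Gnum (gamma : nat -> C) (k n : nat) : C :=
  Cnum gamma k n + gamma (n + 2 * k + 1)%N.

(* A : nat -> nat -> fps is Aitken's iterated Delta^2 process applied to f_n,
   computed in C((z)) and lying in C[[z]]: A_0^(n) = f_n, every
   Delta^2 A_k^(n) is a nonzero series, and A_{k+1}^(n) is the (unique, since
   C((z)) is a field) series with
   A_{k+1}^(n) * Delta^2 A_k^(n) = A_k^(n) * Delta^2 A_k^(n) - (Delta A_k^(n))^2,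
   i.e. A_{k+1}^(n) = A_k^(n) - (Delta A_k^(n))^2 / Delta^2 A_k^(n). *)
Definition is_aitken (gamma : nat -> C) (A : nat -> nat -> fps) : Prop :=
  (forall n, A 0%N n = partial_sum gamma n) /\
  (forall k n, Delta2 (A k) n <> (fun _ => 0)) /\
  (forall k n,
     fps_mul (A k.+1 n) (Delta2 (A k) n) =
     fps_sub (fps_mul (A k n) (Delta2 (A k) n))
             (fps_mul (Delta (A k) n) (Delta (A k) n))).

From HB Require Import structures.
From mathcomp Require Import all_boot all_order all_algebra.
From mathcomp Require Import complex.
From mathcomp Require Import zify.
From Stdlib Require Import Ring FunctionalExtensionality.
Import Order.TTheory GRing.Theory Num.Theory.
Local Open Scope ring_scope.

(* Write A_k^(n) = f + z^N R_k^(n) with N = n + 2k + 1.  Then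
   Delta A_k^(n) = z^N (z R_k^(n+1) - R_k^(n)) and
   Delta^2 A_k^(n) = z^N D with D = R_k^(n) - 2 z R_k^(n+1) + z^2 R_k^(n+2),
   whose constant term C_k^(n) is nonzero, so D is invertible in C[[z]].
   Clearing the denominator in Aitken's step gives
   A_k+1^(n) = f + z^(N+2) (R_k^(n) R_k^(n+2) - (R_k^(n+1))^2) / D,
   i.e. a remainder of the same shape with constant term
   C_k^(n+2) - (C_k^(n+1))^2 / C_k^(n) = C_k+1^(n). *)

Definition fps_zero : fps := fun _ => 0.
Definition fps_one : fps := fun m => if m == 0%N then 1 else 0.
Definition fps_opp (a : fps) : fps := fun m => - a m.

Definition fps_trunc (m : nat) (a : fps) : {poly C} := \poly_(i < m.+1) a i.

(* The ring laws of fps are inherited from {poly C} through truncation. *)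
Lemma fps_mul_trunc (a b : fps) m i : (i <= m)%N ->
  fps_mul a b i = (fps_trunc m a * fps_trunc m b)`_i.
Proof.
move=> le_im; rewrite coefM; apply: eq_bigr => j _.
have lt_jm : (j < m.+1)%N by have := ltn_ord j; lia.
have lt_ijm : (i - j < m.+1)%N by lia.
by rewrite !coef_poly lt_jm lt_ijm.
Qed.

Lemma fps_mulC (a b : fps) : fps_mul a b = fps_mul b a.
Proof.
by apply: functional_extensionality => m; rewrite !(@fps_mul_trunc _ _ m) // mulrC.
Qed.

Lemma fps_mulA (a b c : fps) :
  fps_mul a (fps_mul b c) = fps_mul (fps_mul a b) c.
Proof.
apply: functional_extensionality => m.
have -> : fps_mul a (fps_mul b c) m =
          (fps_trunc m a * (fps_trunc m b * fps_trunc m c))`_m.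
  rewrite coefM; apply: eq_bigr => j _.
  have lt_jm : (j < m.+1)%N := ltn_ord j.
  by rewrite coef_poly lt_jm (@fps_mul_trunc _ _ m) //; lia.
have -> : fps_mul (fps_mul a b) c m =
          ((fps_trunc m a * fps_trunc m b) * fps_trunc m c)`_m.
  rewrite coefM; apply: eq_bigr => j _.
  have lt_jm : (j < m.+1)%N := ltn_ord j.
  have lt_mjm : (m - j < m.+1)%N by lia.
  by rewrite [fps_trunc m c]/fps_trunc coef_poly lt_mjm (@fps_mul_trunc _ _ m) //; lia.
by rewrite mulrA.
Qed.

Lemma fps_mul1 (a : fps) : fps_mul fps_one a = a.
Proof.
apply: functional_extensionality => m.
rewrite /fps_mul big_ord_recl /fps_one eqxx mul1r subn0 big1 ?addr0 //.
by move=> i _; rewrite mul0r.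
Qed.

Lemma fps_mulDl (a b c : fps) :
  fps_mul (fps_add a b) c = fps_add (fps_mul a c) (fps_mul b c).
Proof.
apply: functional_extensionality => m.
by rewrite /fps_add /fps_mul -big_split; apply: eq_bigr => i _; rewrite mulrDl.
Qed.

Lemma fps_ring_theory :
  ring_theory fps_zero fps_one fps_add fps_mul fps_sub fps_opp (@eq fps).
Proof.
split=> //; try by [exact: fps_mul1 | exact: fps_mulC | exact: fps_mulA | exact: fps_mulDl].
all: by move=> *; apply: functional_extensionality => m;
  first [exact: add0r | exact: addrC | exact: addrA | exact: subrr].
Qed.

Add Ring fps_ring : fps_ring_theory.

Lemma fps_mul_coef0 (a b : fps) : fps_mul a b 0%N = a 0%N * b 0%N.
Proof. by rewrite /fps_mul big_ord1. Qed.

Definition fps_monomial (d : nat) : fps := fps_shift d fps_one.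
Definition fps_z : fps := fps_monomial 1.

Lemma fps_shift_lt d (a : fps) m : (m < d)%N -> fps_shift d a m = 0.
Proof. by rewrite /fps_shift; case: leqP. Qed.

Lemma fps_shift_at d (a : fps) : fps_shift d a d = a 0%N.
Proof. by rewrite /fps_shift leqnn subnn. Qed.

Lemma fps_shift0 (a : fps) : fps_shift 0 a = a.
Proof. by apply: functional_extensionality => m; rewrite /fps_shift subn0. Qed.

Lemma fps_shiftE d (a : fps) : fps_shift d a = fps_mul (fps_monomial d) a.
Proof.
apply: functional_extensionality => m.
rewrite /fps_mul /fps_monomial /fps_shift; case: (leqP d m) => [le_dm|lt_md].
  have lt_dm1 : (d < m.+1)%N by lia.
  rewrite (bigD1 (Ordinal lt_dm1)) //= leqnn subnn /fps_one eqxx mul1r.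
  rewrite (@big1 C 0 +%R) ?addr0 // => i /eqP ne_id.
  case: ifP => le_di; last by rewrite mul0r.
  have /negbTE -> : (i - d != 0)%N by apply/eqP => e; apply: ne_id; apply: val_inj => /=; lia.
  by rewrite mul0r.
rewrite (@big1 C 0 +%R) // => i _.
have -> : (d <= i)%N = false by have := ltn_ord i; lia.
by rewrite mul0r.
Qed.

Lemma fps_shiftS d (a : fps) : fps_shift d.+1 a = fps_mul fps_z (fps_shift d a).
Proof.
rewrite /fps_z -fps_shiftE; apply: functional_extensionality => -[|m] //.
by rewrite /fps_shift ltnS subSS subn1.
Qed.

(* [fps_inv_coefs a m] tabulates the first m+1 coefficients b_j of 1/a,
   obtained by solving sum_(i <= j) a_i b_(j-i) = [j == 0] for b_j. *)
Fixpoint fps_inv_coefs (a : fps) (m : nat) : nat -> C :=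
  match m with
  | 0 => fun j => if j == 0%N then (a 0%N)^-1 else 0
  | m'.+1 => fun j =>
      if j == m'.+1 then - (a 0%N)^-1 * \sum_(i < m'.+1) a i.+1 * fps_inv_coefs a m' (m' - i)%N
      else fps_inv_coefs a m' j
  end.

Definition fps_inv (a : fps) : fps := fun m => fps_inv_coefs a m m.

Lemma fps_inv_coefsE a m j : (j <= m)%N -> fps_inv_coefs a m j = fps_inv a j.
Proof.
elim: m => [|m IHm] le_jm; first by have -> : j = 0%N by lia.
case: (eqVneq j m.+1) => [-> //|ne_jm].
by rewrite /= (negbTE ne_jm) IHm //; lia.
Qed.

Lemma fps_mulV (a : fps) : a 0%N != 0 -> fps_mul a (fps_inv a) = fps_one.
Proof.
move=> a0_neq0; apply: functional_extensionality => -[|m].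
  by rewrite fps_mul_coef0 /fps_inv /= mulfV.
rewrite /fps_mul big_ord_recl /fps_inv /= eqxx mulrA mulrN mulfV // mulN1r.
rewrite [X in _ + X](eq_bigr (fun i : 'I_m.+1 => a i.+1 * fps_inv_coefs a m (m - i)%N)).
  by rewrite addNr.
by move=> i _; rewrite /bump /= add1n subSS [fps_inv_coefs a m _]fps_inv_coefsE //; lia.
Qed.

Definition delta2_rem (R0 R1 R2 : fps) : fps :=
  fps_add (fps_sub (fps_shift 2 R2) (fps_shift 1 (fps_add R1 R1))) R0.

Lemma delta2_rem_coef0 R0 R1 R2 : delta2_rem R0 R1 R2 0%N = R0 0%N.
Proof. by rewrite /delta2_rem /fps_add /fps_sub !fps_shift_lt // subrr add0r. Qed.

Section AitkenStep.

Variables (A : nat -> fps) (f R0 R1 R2 : fps) (n N : nat).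
Hypotheses (A0 : A n = fps_add f (fps_shift N R0))
           (A1 : A n.+1 = fps_add f (fps_shift N.+1 R1))
           (A2 : A n.+2 = fps_add f (fps_shift N.+2 R2)).

Lemma Delta2_shift_rem : Delta2 A n = fps_shift N (delta2_rem R0 R1 R2).
Proof.
rewrite /Delta2 /Delta A0 A1 A2 /delta2_rem.
rewrite !fps_shiftS !fps_shift0 !fps_shiftE.
ring.
Qed.

Lemma aitken_step_shift_rem (I : fps) :
  fps_mul (delta2_rem R0 R1 R2) I = fps_one ->
  let A' := fps_add f (fps_shift N.+2 (fps_mul (fps_sub (fps_mul R0 R2) (fps_mul R1 R1)) I)) in
  fps_mul A' (Delta2 A n) =
  fps_sub (fps_mul (A n) (Delta2 A n)) (fps_mul (Delta A n) (Delta A n)).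
Proof.
move=> DI1 A'; rewrite /A' Delta2_shift_rem /Delta A0 A1.
move: DI1; rewrite /delta2_rem !fps_shiftS !fps_shift0 !fps_shiftE.
set D := fps_add _ R0 => DI1.
set P := fps_monomial N.
(* multiplying out, the remainder appears only through D * I *)
transitivity (fps_add (fps_mul f (fps_mul P D))
   (fps_mul (fps_mul (fps_mul P P) (fps_mul fps_z fps_z))
      (fps_mul (fps_sub (fps_mul R0 R2) (fps_mul R1 R1)) (fps_mul D I)))).
  by ring.
by rewrite DI1 /D; ring.
Qed.

End AitkenStep.

Section AitkenSequence.

Variable gamma : nat -> C.

Fixpoint aitken_rem (k : nat) : nat -> fps :=
  match k with
  | 0 => fun n m => - gamma (n.+1 + m)%N
  | k'.+1 => fun n =>
      let R0 := aitken_rem k' n in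
      let R1 := aitken_rem k' n.+1 in
      let R2 := aitken_rem k' n.+2 in
      fps_mul (fps_sub (fps_mul R0 R2) (fps_mul R1 R1)) (fps_inv (delta2_rem R0 R1 R2))
  end.

Definition aitken_seq (k n : nat) : fps :=
  fps_add gamma (fps_shift (n + 2 * k + 1) (aitken_rem k n)).

Lemma aitken_seqE k n N : N = (n + 2 * k + 1)%N ->
  aitken_seq k n = fps_add gamma (fps_shift N (aitken_rem k n)).
Proof. by move->. Qed.

Lemma aitken_seq0 n : aitken_seq 0 n = partial_sum gamma n.
Proof.
apply: functional_extensionality => m.
rewrite /aitken_seq /partial_sum /fps_add /fps_shift muln0 addn0.
case: (leqP m n) => [le_mn|lt_nm]; first by rewrite ifF ?addr0 //; lia.
rewrite ifT /=; last by lia.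
by rewrite (_ : n.+1 + _ = m)%N ?subrr //; lia.
Qed.

Lemma aitken_seq_coef_lt k n m : (m < n + 2 * k + 1)%N -> aitken_seq k n m = gamma m.
Proof. by move=> lt_mN; rewrite /aitken_seq /fps_add fps_shift_lt // addr0. Qed.

Hypothesis Cnum_neq0 : forall k n, Cnum gamma k n != 0.

Lemma aitken_rem_coef0 k n : aitken_rem k n 0%N = Cnum gamma k n.
Proof.
elim: k n => [|k IHk] n; first by rewrite /= addn0.
rewrite /= fps_mul_coef0 /fps_sub !fps_mul_coef0 /fps_inv /= delta2_rem_coef0 !IHk.
by rewrite mulrBl -expr2 mulrAC mulfV // mul1r.
Qed.

Lemma Delta2_aitken_seq k n :
  Delta2 (aitken_seq k) n = fps_shift (n + 2 * k + 1)
    (delta2_rem (aitken_rem k n) (aitken_rem k n.+1) (aitken_rem k n.+2)).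
Proof. by apply: Delta2_shift_rem; apply: aitken_seqE; lia. Qed.

Lemma is_aitken_aitken_seq : is_aitken gamma aitken_seq.
Proof.
split; [exact: aitken_seq0 | split=> k n].
  rewrite Delta2_aitken_seq => /(congr1 (fun a => a (n + 2 * k + 1)%N)).
  by rewrite fps_shift_at delta2_rem_coef0 aitken_rem_coef0; apply/eqP.
rewrite [aitken_seq k.+1 n](@aitken_seqE k.+1 n (n + 2 * k + 1).+2); last by lia.
apply: (@aitken_step_shift_rem _ gamma (aitken_rem k n) (aitken_rem k n.+1) (aitken_rem k n.+2));
  try (apply: aitken_seqE; lia).
by apply: fps_mulV; rewrite delta2_rem_coef0 aitken_rem_coef0.
Qed.

Lemma aitken_seq_coef_le k n m : (m <= n + 2 * k + 1)%N ->
  aitken_seq k n m = partial_sum gamma (n + 2 * k) m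
                     + (if m == (n + 2 * k + 1)%N then Gnum gamma k n else 0).
Proof.
rewrite leq_eqVlt => /predU1P [->|lt_mN].
  rewrite /aitken_seq /fps_add fps_shift_at aitken_rem_coef0 /partial_sum eqxx.
  by rewrite ifF ?add0r 1?addrC //; lia.
rewrite aitken_seq_coef_lt // /partial_sum ifT ?ifF ?addr0 //; lia.
Qed.

End AitkenSequence.

Lemma Gnum0 gamma n : Gnum gamma 0 n = 0.
Proof. by rewrite /Gnum /= muln0 addn0 addn1 addNr. Qed.

Lemma Gnum1 gamma n : Gnum gamma 1 n = gamma (n + 2)%N ^+ 2 / gamma (n + 1)%N.
Proof.
rewrite /Gnum /= (_ : n + 2 * 1 + 1 = n.+3)%N ?addn2 ?addn1; last by lia.
by rewrite sqrrN invrN mulrN opprK addrAC addNr add0r.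
Qed.

Lemma GnumS gamma k n :
  Gnum gamma k.+1 n =
    Gnum gamma k (n + 2)%N
    + (gamma (n + 2 * k + 2)%N - Gnum gamma k (n + 1)%N) ^+ 2
      / (gamma (n + 2 * k + 1)%N - Gnum gamma k n).
Proof.
rewrite /Gnum [Cnum gamma k.+1 n]/=.
rewrite (_ : n + 2 * k.+1 + 1 = n + 2 + 2 * k + 1)%N; last by lia.
rewrite (_ : n + 1 + 2 * k + 1 = n + 2 * k + 2)%N; last by lia.
rewrite !addn2 !addn1.
have subDl (x y : C) : x - (y + x) = - y by rewrite opprD addrCA subrr addr0.
by rewrite !subDl sqrrN invrN mulrN addrAC.
Qed.

Theorem mainTheorem1 (gamma : nat -> C) :
  (forall k n, Cnum gamma k n != 0) ->
  exists A : nat -> nat -> fps,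
    is_aitken gamma A /\
    forall k n,
      (* (i) *)
      (exists Rkn : fps,
          Rkn 0%N = Cnum gamma k n /\
          A k n = fps_add gamma (fps_shift (n + 2 * k + 1) Rkn)) /\
      (forall m, (m < n + 2 * k + 1)%N -> A k n m = gamma m) /\
      (* (ii) *)
      (forall m, (m <= n + 2 * k + 1)%N ->
          A k n m = partial_sum gamma (n + 2 * k) m
                    + (if m == (n + 2 * k + 1)%N then Gnum gamma k n else 0)) /\
      Gnum gamma 0 n = 0 /\
      Gnum gamma 1 n = gamma (n + 2)%N ^+ 2 / gamma (n + 1)%N /\
      Gnum gamma k.+1 n =
        Gnum gamma k (n + 2)%N
        + (gamma (n + 2 * k + 2)%N - Gnum gamma k (n + 1)%N) ^+ 2
          / (gamma (n + 2 * k + 1)%N - Gnum gamma k n).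
Proof.
move=> Cnum_neq0; exists (aitken_seq gamma).
split; first exact: is_aitken_aitken_seq.
move=> k n; split; last split; last split.
- by exists (aitken_rem gamma k n); rewrite aitken_rem_coef0.
- exact: aitken_seq_coef_lt.
- exact: aitken_seq_coef_le.
- by rewrite Gnum0 Gnum1 GnumS.
Qed.
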